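(* Let $\mathbb{F}\in\{\mathbb{R},\mathbb{C}\}$ and let $p,q,r,s\in\mathbb{F}$ with $r\neq s^2$, $q\neq s^3$, or $p\neq s^4$. Let $\delta$ be the space quartic in $\mathbb{F}\mathbb{P}^3$ parametrised by $t\mapsto[t^4-p,\,t^3+q,\,t^2-r,\,t+s]$, $t\in\mathbb{F}$. A plane intersects $\delta$ in four points parametrised by $t_1,t_2,t_3,t_4$, counting multiplicity, if and only if $$F(t_1,t_2,t_3,t_4):=t_1t_2t_3t_4+s\sum_{i<j<k}t_it_jt_k+r\sum_{i<j}t_it_j+q\sum_i t_i+p=0.$$ In particular, if $t_1,t_2,t_3$ are distinct, then $F(t_1,t_1,t_2,t_3)=0$ if and only if the plane through the points with parameters $t_1,t_2,t_3$ intersects $\delta$ only in those three points and contains the tangent line of $\delta$ at $t_1$.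
   Context: A space quartic is an irreducible non-planar curve of degree $4$ in projective $3$-space. *)

From HB Require Import structures.
From mathcomp Require Import all_boot all_order all_algebra.
From mathcomp Require Import reals.
From mathcomp Require Import complex.
Set Implicit Arguments. Unset Strict Implicit. Unset Printing Implicit Defensive.
Import Order.TTheory GRing.Theory Num.Theory.
Local Open Scope ring_scope.

Section QuarticDefs.
Variable F : fieldType.
Variables p q r s : F.

Definition qcoord (i : 'I_4) : {poly F} :=
  match val i with
  | 0 => 'X^4 - p%:P
  | 1 => 'X^3 + q%:P
  | 2 => 'X^2 - r%:P
  | _ => 'X + s%:P
  end.

Definition qpoint (t : F) : 'rV[F]_4 := \row_i (qcoord i).[t].
Definition qtangent (t : F) : 'rV[F]_4 := \row_i (qcoord i)^`().[t].

(* A plane in FP^3 is given by a nonzero row a : a_0 x_0 + ... + a_3 x_3 = 0. *)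
Definition on_plane (a v : 'rV[F]_4) : Prop := \sum_i a 0 i * v 0 i = 0.

Definition pullback (a : 'rV[F]_4) : {poly F} := \sum_i a 0 i *: qcoord i.

(* The plane a meets delta exactly in the points with parameters t1..t4,
   counted with multiplicity: no intersection at the point at infinity
   [1:0:0:0] = delta(oo) (i.e. a_0 <> 0), and every parameter x has
   intersection multiplicity (root multiplicity of the pullback) equal
   to the number of times x occurs among t1..t4. *)
Definition meets_in_four (a : 'rV[F]_4) (t1 t2 t3 t4 : F) : Prop :=
  a != 0 /\ a 0 0 != 0 /\
  forall x : F, mup x (pullback a) = count_mem x [:: t1; t2; t3; t4].

Definition Fq (t1 t2 t3 t4 : F) : F :=
  t1 * t2 * t3 * t4
  + s * (t1 * t2 * t3 + t1 * t2 * t4 + t1 * t3 * t4 + t2 * t3 * t4)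
  + r * (t1 * t2 + t1 * t3 + t1 * t4 + t2 * t3 + t2 * t4 + t3 * t4)
  + q * (t1 + t2 + t3 + t4) + p.

End QuarticDefs.

Definition lemma3p2_over (F : fieldType) : Prop :=
  forall p q r s : F,
  (r != s ^+ 2) \/ (q != s ^+ 3) \/ (p != s ^+ 4) ->
  (forall t1 t2 t3 t4 : F,
      Fq p q r s t1 t2 t3 t4 = 0 <->
      exists a : 'rV[F]_4, meets_in_four p q r s a t1 t2 t3 t4)
  /\
  (forall t1 t2 t3 : F,
      t1 != t2 -> t1 != t3 -> t2 != t3 ->
      (Fq p q r s t1 t1 t2 t3 = 0 <->
       exists a : 'rV[F]_4,
         a != 0 /\
             on_plane a (qpoint p q r s t1) /\
             on_plane a (qpoint p q r s t2) /\
             on_plane a (qpoint p q r s t3) /\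
             on_plane a (qtangent p q r s t1) /\
             (* it meets delta only in those three points
                (not at delta(oo) = [1:0:0:0], and no other parameter) *)
             a 0 0 != 0 /\
             forall x : F, root (pullback p q r s a) x ->
               x \in [:: t1; t2; t3])).

(* The pullback of the plane [a] to the parameter line is a polynomial of
   degree at most 4 with leading coefficient a_0, and these pullbacks are
   exactly the polynomials P of degree at most 4 satisfying the single linear
   condition  P_0 + p P_4 - q P_3 + r P_2 - s P_1 = 0.  A plane meets delta in
   t1, .., t4 (with multiplicity, and not at infinity) iff its pullback is a
   nonzero multiple of (X - t1)..(X - t4), and by Vieta's formulas the linear
   condition on that product is exactly F(t1, t2, t3, t4) = 0.  The second
   statement is the case t1 = t2 of the first: a plane contains delta(t1) and
   the tangent line there iff t1 is a double root of the pullback. *)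

From HB Require Import structures.
From mathcomp Require Import all_boot all_order all_algebra ring.
From mathcomp Require Import reals complex.
Set Implicit Arguments. Unset Strict Implicit. Unset Printing Implicit Defensive.
Import GRing.Theory.
Local Open Scope ring_scope.

Section PolyFacts.
Variable F : fieldType.
Implicit Types (P m : {poly F}) (x : F).

Lemma prod_XsubC_dvdp P (ts : seq F) : P != 0 ->
  (forall x, count_mem x ts <= mup x P)%N -> \prod_(t <- ts) ('X - t%:P) %| P.
Proof.
elim: ts P => [|t ts IH] P P0 cnt_le; first by rewrite big_nil dvd1p.
have /dvdpP [Q defP] : 'X - t%:P %| P.
  by rewrite XsubC_dvd // (leq_trans _ (cnt_le t)) //= eqxx.
have Q0 : Q != 0 by apply: contraNneq P0 => Q0; rewrite defP Q0 mul0r.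
rewrite big_cons defP [Q * _]mulrC dvdp_mul2l ?polyXsubC_eq0 //.
apply: IH => // x; have := cnt_le x.
rewrite defP mupM ?polyXsubC_eq0 // -(expr1 ('X - t%:P)) mup_XsubCX /=.
by case: (t == x); rewrite ?addn0 ?addn1.
Qed.

Lemma mup_gt0 P x : P != 0 -> (0 < mup x P)%N = root P x.
Proof. by move=> P0; rewrite -XsubC_dvd // dvdp_XsubCl. Qed.

Lemma XsubC_sqr_dvdp P x :
  (('X - x%:P) ^+ 2 %| P) = root P x && root P^`() x.
Proof.
apply/idP/andP => [/dvdpP [Q ->] | [/factor_theorem [Q ->]]].
  rewrite expr2 mulrA derivM derivXsubC /root !hornerE subrr.
  by rewrite !(mulr0, add0r, mul0r).
rewrite derivM derivXsubC /root !hornerE subrr ?mulr0 ?add0r ?mulr1.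
by move=> /factor_theorem [Q' ->]; rewrite -mulrA -expr2 dvdp_mull.
Qed.

Lemma monic_dvdp_scaleE m P : m \is monic -> m %| P -> (size P <= size m)%N ->
  P = P`_(size m).-1 *: m.
Proof.
move=> m_monic /dvdpP [Q ->]; have [->|Q0] := eqVneq Q 0.
  by rewrite mul0r coef0 scale0r.
have m0 : m != 0 := monic_neq0 m_monic.
rewrite size_mul // => size_le.
have /size1_polyC -> : (size Q <= 1)%N.
  move: size_le; rewrite -size_poly_gt0 in m0; case: (size m) m0 => // n _.
  by rewrite addnS -[n.+1]add1n leq_add2r.
by rewrite mul_polyC coefZ -lead_coefE (monicP m_monic) mulr1.
Qed.

End PolyFacts.

Lemma mx_neq0_of_entry (R : nzSemiRingType) m n (A : 'M[R]_(m, n)) i j :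
  A i j != 0 -> A != 0.
Proof. by apply: contraNneq => ->; rewrite mxE. Qed.

Section QuarticPlanes.
Variable F : fieldType.
Variables p q r s : F.
Implicit Types (a : 'rV[F]_4) (P : {poly F}) (t x : F).

Local Notation pullback := (pullback p q r s).
Local Notation Fq := (Fq p q r s).

Definition plane_defect P : F :=
  P`_0 + p * P`_4 - q * P`_3 + r * P`_2 - s * P`_1.

Definition plane_of P : 'rV[F]_4 := \row_(i < 4) P`_(4 - i).

Lemma pullback_Poly a : pullback a =
  Poly [:: - a 0 0 * p + a 0 1 * q - a 0 2 * r + a 0 3 * s;
           a 0 3; a 0 2; a 0 1; a 0 0].
Proof.
rewrite /pullback !big_ord_recl big_ord0 /qcoord /= !cons_poly_def.
have [-> -> ->] : [/\ lift ord0 ord0 = 1 :> 'I_4,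
  lift ord0 (lift ord0 ord0) = 2 :> 'I_4
  & lift ord0 (lift ord0 (lift ord0 ord0)) = 3 :> 'I_4].
  by split; apply: val_inj.
rewrite -!mul_polyC !rmorphD !rmorphN !rmorphM /=; ring.
Qed.

Lemma prod_XsubC4_Poly t1 t2 t3 t4 :
  \prod_(t <- [:: t1; t2; t3; t4]) ('X - t%:P) =
  Poly [:: t1 * t2 * t3 * t4;
           - (t1 * t2 * t3 + t1 * t2 * t4 + t1 * t3 * t4 + t2 * t3 * t4);
           t1 * t2 + t1 * t3 + t1 * t4 + t2 * t3 + t2 * t4 + t3 * t4;
           - (t1 + t2 + t3 + t4); 1].
Proof.
rewrite !big_cons big_nil /= !cons_poly_def.
by rewrite !rmorphN !rmorphD !rmorphM rmorph1; ring.
Qed.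

Lemma plane_defect_pullback a : plane_defect (pullback a) = 0.
Proof. by rewrite pullback_Poly /plane_defect !coef_Poly /=; ring. Qed.

Lemma plane_defect_prod_XsubC t1 t2 t3 t4 :
  plane_defect (\prod_(t <- [:: t1; t2; t3; t4]) ('X - t%:P)) = Fq t1 t2 t3 t4.
Proof. by rewrite prod_XsubC4_Poly /plane_defect !coef_Poly /= /Fq; ring. Qed.

Lemma pullback_plane_of P :
  (size P <= 5)%N -> plane_defect P = 0 -> pullback (plane_of P) = P.
Proof.
move=> /leq_sizeP P_small P_defect; apply/polyP => k.
rewrite pullback_Poly coef_Poly !mxE.
case: k => [|[|[|[|[|k]]]]] //=; last by rewrite nth_nil P_small.
(* the numerals of ['I_4] are elements of ['Z_4], with values taken mod 4 *)
rewrite !modn_small // !add1n !subSS !subn0.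
transitivity (P`_0 - plane_defect P); last by rewrite P_defect subr0.
by rewrite /plane_defect; ring.
Qed.

Lemma size_pullback a : (size (pullback a) <= 5)%N.
Proof. by rewrite pullback_Poly (leq_trans (size_Poly _)). Qed.

Lemma coef4_pullback a : (pullback a)`_4 = a 0 0.
Proof. by rewrite pullback_Poly coef_Poly. Qed.

Lemma pullback_neq0 a : a 0 0 != 0 -> pullback a != 0.
Proof. by apply: contraNneq => pullback0; rewrite -coef4_pullback pullback0 coef0. Qed.

Lemma plane_defectZ c P : plane_defect (c *: P) = c * plane_defect P.
Proof. by rewrite /plane_defect !coefZ; ring. Qed.

Lemma Fq_eq0_pullback_prod t1 t2 t3 t4 : Fq t1 t2 t3 t4 = 0 ->
  exists2 a : 'rV[F]_4, a 0 0 = 1 &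
    pullback a = \prod_(t <- [:: t1; t2; t3; t4]) ('X - t%:P).
Proof.
set V := \prod_(t <- _) _ => Fq0.
have V_monic : V \is monic := monic_prod_XsubC _ _ _.
have size_V : size V = 5%N by rewrite size_prod_XsubC.
exists (plane_of V).
  by rewrite /plane_of mxE subn0 -[4%N]/(5.-1)%N -size_V -lead_coefE (monicP V_monic).
by rewrite pullback_plane_of ?size_V ?plane_defect_prod_XsubC.
Qed.

Lemma Fq_eq0_of_dvdp a t1 t2 t3 t4 : a 0 0 != 0 ->
  \prod_(t <- [:: t1; t2; t3; t4]) ('X - t%:P) %| pullback a -> Fq t1 t2 t3 t4 = 0.
Proof.
move=> a00 /(monic_dvdp_scaleE (monic_prod_XsubC _ _ _)).
rewrite size_prod_XsubC size_pullback coef4_pullback.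
move=> /(_ isT) /(congr1 plane_defect).
by rewrite plane_defectZ plane_defect_prod_XsubC plane_defect_pullback => /esym /eqP;
  rewrite mulf_eq0 (negbTE a00) => /eqP.
Qed.

Lemma on_plane_qpoint a t : on_plane a (qpoint p q r s t) <-> root (pullback a) t.
Proof.
rewrite /on_plane /root /pullback horner_sum.
rewrite (eq_bigr (fun i => (a 0 i *: qcoord p q r s i).[t])) => [|i _].
  by split => [-> | /eqP].
by rewrite hornerZ mxE.
Qed.

Lemma on_plane_qtangent a t :
  on_plane a (qtangent p q r s t) <-> root (pullback a)^`() t.
Proof.
rewrite /on_plane /root /pullback raddf_sum horner_sum.
rewrite (eq_bigr (fun i => (a 0 i *: qcoord p q r s i)^`().[t])) => [|i _].
  by split => [-> | /eqP].
by rewrite derivZ hornerZ mxE.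
Qed.

Lemma meets_in_fourP t1 t2 t3 t4 : Fq t1 t2 t3 t4 = 0 <->
  exists a, meets_in_four p q r s a t1 t2 t3 t4.
Proof.
split=> [/Fq_eq0_pullback_prod [a a00 pullbackE] | [a [_ [a00 mup_pullback]]]].
  have a00_neq0 : a 0 0 != 0 by rewrite a00 oner_neq0.
  exists a; split; first exact: mx_neq0_of_entry a00_neq0.
  by split=> // x; rewrite pullbackE mu_prod_XsubC.
apply: (Fq_eq0_of_dvdp a00); apply: prod_XsubC_dvdp; first exact: pullback_neq0.
by move=> x; rewrite mup_pullback.
Qed.

Lemma tangent_planeP t1 t2 t3 : t1 != t2 -> t1 != t3 -> t2 != t3 ->
  Fq t1 t1 t2 t3 = 0 <->
  exists a, a != 0 /\ on_plane a (qpoint p q r s t1) /\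
    on_plane a (qpoint p q r s t2) /\ on_plane a (qpoint p q r s t3) /\
    on_plane a (qtangent p q r s t1) /\ a 0 0 != 0 /\
    forall x, root (pullback a) x -> x \in [:: t1; t2; t3].
Proof.
move=> t12 t13 t23; split=> [/Fq_eq0_pullback_prod [a a00 pullbackE] | [a]].
  have a00_neq0 : a 0 0 != 0 by rewrite a00 oner_neq0.
  have pullback_t1 : ('X - t1%:P) ^+ 2 %| pullback a.
    by rewrite -mup_geq ?pullback_neq0 // pullbackE mu_prod_XsubC /= eqxx.
  have root'_t1 : root (pullback a)^`() t1.
    by move: pullback_t1; rewrite XsubC_sqr_dvdp => /andP [].
  exists a; split; first exact: mx_neq0_of_entry a00_neq0.
  rewrite !on_plane_qpoint on_plane_qtangent root'_t1 pullbackE !root_prod_XsubC.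
  do !split; rewrite ?inE ?eqxx ?orbT // => x.
  by rewrite root_prod_XsubC !inE orbA orbb.
rewrite !on_plane_qpoint on_plane_qtangent.
move=> [_ [root_t1 [root_t2 [root_t3 [root'_t1 [a00 _]]]]]].
have pullback0 := pullback_neq0 a00.
apply: (Fq_eq0_of_dvdp a00); apply: prod_XsubC_dvdp => // x /=.
have [<-|_] := eqVneq t1 x.
  rewrite (eq_sym t2) (eq_sym t3) (negbTE t12) (negbTE t13).
  by rewrite mup_geq // XsubC_sqr_dvdp root_t1.
have [<-|_] := eqVneq t2 x; first by rewrite (eq_sym t3) (negbTE t23) mup_gt0.
by have [<-|] := eqVneq t3 x; rewrite ?mup_gt0.
Qed.

End QuarticPlanes.

Lemma lemma3p2_over_fieldType (F : fieldType) : lemma3p2_over F.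
Proof.
move=> p q r s _.
by split=> [t1 t2 t3 t4 | t1 t2 t3]; [exact: meets_in_fourP | exact: tangent_planeP].
Qed.

Theorem lemma3p2 (R : reals.Real.type) :
  lemma3p2_over R /\ lemma3p2_over (complex R).
Proof. by split; apply: lemma3p2_over_fieldType. Qed.
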